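(* Let $T\in V$ be a target variable. If $\zeta_T=n$ (i.e. $T\in\Upsilon_i$ for all $i$) and the family $\{\Upsilon_1\setminus\{T\},\dots,\Upsilon_n\setminus\{T\}\}$ is not conservative, then $\bigcup_{i=1}^{n}MB_i(T)\subseteq ch(T)\cup sp(T)$.
   Context: Let $G=(V,E)$ be a DAG (causal Bayesian network) over a finite set $V$ of random variables with joint distribution $P$ satisfying the Markov condition with respect to $G$; causal sufficiency is assumed. For $X\in V$, $pa(X)$ and $ch(X)$ are the parents and children of $X$ in $G$, $sp(X)=\big(\bigcup_{Y\in ch(X)}pa(Y)\big)\setminus\{X\}$ is the set of spouses. There are $n\ge 1$ intervention experiments; in the $i$-th, the set $\Upsilon_i\subseteq V$ is manipulated. The post-intervention DAG is $G_i=(V,E_i)$ with $E_i=\{(a,b)\in E: b\notin\Upsilon_i\}$, with distribution $P_i(V)=\prod_{V_j\notin\Upsilon_i}P(V_j\mid pa(V_j))\prod_{V_j\in\Upsilon_i}P_i(V_j)$, and $D_i$ is a dataset drawn from $P_i$. It is assumed that each $P_i$ is faithful to $G_i$ and that conditional independence tests on $D_i$ are reliable (return exactly the conditional independences of $P_i$). $MB_i(T)$ denotes the Markov blanket of $T$ found in $D_i$, i.e. the set of parents, children and spouses of $T$ in $G_i$. $\zeta_T=|\{i:T\in\Upsilon_i\}|$. A family $\{A_1,\dots,A_n\}$ of subsets of $V$ is called conservative if for every $V_j\in\bigcup_{i=1}^n A_i$ there exists $i$ with $V_j\notin A_i$. *)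

From mathcomp Require Import all_boot.
Set Implicit Arguments. Unset Strict Implicit. Unset Printing Implicit Defensive.

Definition acyclic (V : finType) (E : rel V) : Prop :=
  forall a b, E a b -> ~~ connect E b a.

Definition pa (V : finType) (E : rel V) (X : V) : {set V} := [set a | E a X].
Definition ch (V : finType) (E : rel V) (X : V) : {set V} := [set b | E X b].
Definition sp (V : finType) (E : rel V) (X : V) : {set V} :=
  (\bigcup_(Y in ch E X) pa E Y) :\ X.

(* post-intervention graph G_i: remove all edges into manipulated vertices *)
Definition post_int (V : finType) (E : rel V) (U : {set V}) : rel V :=
  fun a b => E a b && (b \notin U).

(* Markov blanket of T in the post-intervention graph G_i (as found by
   reliable CI tests on D_i under faithfulness of P_i to G_i). *)
Definition MB (V : finType) (E : rel V) (U : {set V}) (T : V) : {set V} :=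
  pa (post_int E U) T :|: ch (post_int E U) T :|: sp (post_int E U) T.

Definition zeta (V : finType) (n : nat) (Ups : 'I_n -> {set V}) (T : V) : nat :=
  #|[set i | T \in Ups i]|.

Definition conservative (V : finType) (n : nat) (A : 'I_n -> {set V}) : Prop :=
  forall v, v \in \bigcup_(i < n) A i -> exists i, v \notin A i.

From mathcomp Require Import all_boot.

(* Intervening on T deletes every edge into T, so T has no parents in any
   post-intervention graph G_i; and since G_i only loses edges of G, the
   children and spouses of T in G_i are children and spouses of T in G. *)

Section PostIntervention.

Variables (V : finType) (E : rel V) (U : {set V}).

Lemma post_int_sub a b : post_int E U a b -> E a b.
Proof. by case/andP. Qed.

Lemma pa_post_int_manipulated X : X \in U -> pa (post_int E U) X = set0.
Proof. by move=> XU; apply/setP => a; rewrite !inE /post_int XU andbF. Qed.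

Lemma pa_post_int_sub X : pa (post_int E U) X \subset pa E X.
Proof. by apply/subsetP => a; rewrite !inE; apply: post_int_sub. Qed.

Lemma ch_post_int_sub X : ch (post_int E U) X \subset ch E X.
Proof. by apply/subsetP => b; rewrite !inE; apply: post_int_sub. Qed.

Lemma sp_post_int_sub X : sp (post_int E U) X \subset sp E X.
Proof.
apply: setSD; apply/bigcupsP => Y /(subsetP (ch_post_int_sub X)) YchX.
exact: subset_trans (pa_post_int_sub Y) (bigcup_sup _ YchX).
Qed.

Lemma MB_manipulated_sub T : T \in U -> MB E U T \subset ch E T :|: sp E T.
Proof.
move=> TU; rewrite /MB pa_post_int_manipulated // set0U.
exact: setUSS (ch_post_int_sub T) (sp_post_int_sub T).
Qed.

End PostIntervention.

Lemma zeta_full (V : finType) (n : nat) (Ups : 'I_n -> {set V}) (T : V) :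
  zeta Ups T = n -> forall i, T \in Ups i.
Proof.
move=> zetaT i; have /setP/(_ i) : [set i | T \in Ups i] = setT.
  by apply/eqP; rewrite eqEcard subsetT cardsT card_ord /= -[X in X <= _]zetaT.
by rewrite !inE => ->.
Qed.

Theorem theorem9 (V : finType) (E : rel V) (n : nat) (Ups : 'I_n -> {set V}) (T : V) :
  acyclic E -> 0 < n ->
  zeta Ups T = n ->
  ~ conservative (fun i => Ups i :\ T) ->
  \bigcup_(i < n) MB E (Ups i) T \subset ch E T :|: sp E T.
Proof.
move=> _ _ /zeta_full TUps _.
by apply/bigcupsP => i _; apply: MB_manipulated_sub (TUps i).
Qed.
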